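(* Let $G$ be a connected graph with a cut vertex, let $\mathcal B$ and $C$ be the sets of blocks and cut vertices of $G$, respectively, and let $T$ be the block tree of $G$. Then $G$ is $1$-perfectly orientable if and only if one of the following conditions holds: (1) There exists a block $B_r$ of $G$ such that $B_r$ is $1$-perfectly orientable and for every arc $(B,v)\in\mathcal B\times C$ of the $B_r$-rooted orientation of $T$, the rooted graph $B^v$ is $1$-perfectly orientable. (2) There exists a cut vertex $v_r$ of $G$ such that for every arc $(B,v)\in\mathcal B\times C$ of the $v_r$-rooted orientation of $T$, the rooted graph $B^v$ is $1$-perfectly orientable.
   Context: All graphs are finite and simple. An orientation of $G$ is $1$-perfect if for every vertex the out-neighborhood is a clique in $G$; $G$ is $1$-perfectly orientable if it has a $1$-perfect orientation. A sink is a vertex of out-degree $0$. A rooted graph $B^v$ is a pair $(B,v)$ with $v\in V(B)$; it is $1$-perfectly orientable if $B$ has a $1$-perfect orientation in which $v$ is a sink. A graph is biconnected if it is connected and has no cut vertex; a block is a maximal biconnected subgraph. The block tree $T$ of a connected graph $G$ has vertex set $\mathcal B\cup C$, with a block $B$ adjacent to a cut vertex $v$ iff $v\in V(B)$. For a tree $T$ and a vertex $r$ of $T$, the $r$-rooted orientation of $T$ is the orientation in which every edge $\{x,y\}$ is oriented $x\to y$ iff $d_T(y,r)<d_T(x,r)$ (all edges point towards $r$). *)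

(* simple graphs as symmetric irreflexive relations on a finType. *)
From mathcomp Require Import all_boot.
Set Implicit Arguments. Unset Strict Implicit. Unset Printing Implicit Defensive.

Section Graphs.
Variable T : finType.
Variable e : rel T.

Definition induced (S : {set T}) : rel T :=
  [rel x y | [&& e x y, x \in S & y \in S]].

Definition connectedb (S : {set T}) : bool :=
  (S != set0) && [forall x in S, forall y in S, connect (induced S) x y].

Definition cut_vertexb (S : {set T}) (v : T) : bool :=
  (v \in S) &&
  [exists x in S :\ v, exists y in S :\ v, ~~ connect (induced (S :\ v)) x y].

Definition biconnectedb (S : {set T}) : bool :=
  connectedb S && [forall v in S, ~~ cut_vertexb S v].

(* blocks = maximal biconnected subgraphs; a maximal biconnected subgraph is
   always induced, so it is represented by its vertex set *)
Definition blockb (B : {set T}) : bool :=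
  biconnectedb B && [forall S : {set T}, (B \subset S) && biconnectedb S ==> (S == B)].

Definition orientation_of (S : {set T}) (D : rel T) : Prop :=
  (forall x y, D x y -> induced S x y) /\
  (forall x y, induced S x y -> D x y != D y x).

Definition one_perfect (D : rel T) : Prop :=
  forall x y z, D x y -> D x z -> y != z -> e y z.

Definition one_perfectly_orientable_on (S : {set T}) : Prop :=
  exists D : rel T, orientation_of S D /\ one_perfect D.

(* rooted graph G[B]^v is 1-perfectly orientable: 1-perfect orientation of G[B]
   in which v is a sink *)
Definition rooted_one_perfectly_orientable (B : {set T}) (v : T) : Prop :=
  exists D : rel T, [/\ orientation_of B D, one_perfect D & forall y, ~~ D v y].

(* nodes: inl B for blocks B, inr v for cut vertices v *)
Definition btnode := ({set T} + T)%type.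

Definition bt_adj : rel btnode := fun a b =>
  match a, b with
  | inl B, inr v | inr v, inl B =>
      [&& blockb B, cut_vertexb setT v & v \in B]
  | _, _ => false
  end.

Fixpoint within (r : btnode) (k : nat) (x : btnode) : bool :=
  match k with
  | 0 => x == r
  | k'.+1 => within r k' x || [exists y, bt_adj x y && within r k' y]
  end.

(* distance d_T(x, r) (the block tree is connected, so any node is within
   #|btnode| steps of r) *)
Definition bt_dist (r x : btnode) : nat :=
  find (fun k => within r k x) (iota 0 #|{: {set T} + T}|.+1).

Definition rooted_arc (r a b : btnode) : bool :=
  bt_adj a b && (bt_dist r b < bt_dist r a).

End Graphs.

From mathcomp Require Import all_boot zify.
From Stdlib Require Import ClassicalEpsilon.
Set Implicit Arguments. Unset Strict Implicit. Unset Printing Implicit Defensive.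

(* A 1-perfect orientation D of G restricts to every block, and it orients the
   block tree: a cut vertex v points to a block B when v has an out-neighbour
   in B, and B points to v otherwise.  Out-neighbours of v in two different
   blocks would be adjacent although v separates them, and a 1-perfect
   orientation of a connected graph has at most one sink, so every node of the
   tree has out-degree at most one.
   The tree node without out-arc is the root r, and every block B then sees its
   parent v in the r-rooted tree as a sink of D restricted to B.  Conversely,
   orientations of the blocks in which each parent is a sink glue to a 1-perfect
   orientation of G, because a vertex has out-neighbours only in the block that
   is its own parent. *)

Section Blocks.
Variable T : finType.
Variable e : rel T.
Hypothesis e_sym : symmetric e.
Hypothesis e_irr : irreflexive e.

Implicit Types (A X S B : {set T}) (x y z u v w a b : T).
Local Notation conn A := (connect (induced e A)).

Lemma induced_sym A : symmetric (induced e A).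
Proof. by move=> x y; rewrite /induced /= e_sym [(y \in A) && _]andbC. Qed.

Lemma conn_sym A x y : conn A x y = conn A y x.
Proof. exact: sym_connect_sym (@induced_sym A) x y. Qed.

Lemma conn_edge A x y : e x y -> x \in A -> y \in A -> conn A x y.
Proof. by move=> exy xA yA; apply: connect1; rewrite /induced /= exy xA yA. Qed.

Lemma conn_sub A A' x y : A \subset A' -> conn A x y -> conn A' x y.
Proof.
move=> sAA'; apply: connect_sub => {}x {}y /and3P[exy xA yA].
by apply: conn_edge; rewrite // (subsetP sAA').
Qed.

Lemma path_induced_mem A x p u : path (induced e A) x p -> u \in p -> u \in A.
Proof.
elim: p x => [|c p IH] x //= /andP[/and3P[_ _ cA] pth].
by rewrite inE => /orP[/eqP->|/(IH c pth)].
Qed.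

Lemma conn_mem A x y : conn A x y -> x != y -> (x \in A) && (y \in A).
Proof.
case/connectP=> [[|c p]] /= pth ->; first by rewrite eqxx.
case/andP: pth => /and3P[_ -> cA] pth _ /=.
by have := mem_last c p; rewrite inE => /orP[/eqP->|/(path_induced_mem pth)].
Qed.

Lemma connected_conn A x y : connectedb e A -> x \in A -> y \in A -> conn A x y.
Proof. by case/andP=> _ /forall_inP/(_ x) H /H /forall_inP; apply. Qed.

Lemma conn_mem_neq A x y w : conn (A :\ w) x y -> y != w -> x != w.
Proof.
move=> cxy yw; have [->|xy] := eqVneq x y; first by [].
by case/andP: (conn_mem cxy xy); rewrite in_setD1 => /andP[].
Qed.

Lemma connected_no_isolated v : connectedb e setT -> cut_vertexb e setT v ->
  forall x, exists y, e x y.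
Proof.
move=> cG /andP[_ /exists_inP[a aTv _]] x.
have [w wx] : exists w, w != x.
  have [<-|ax] := eqVneq a x; last by exists a.
  by exists v; move: aTv; rewrite in_setD1 eq_sym => /andP[].
have /connectP[[|c p] /= pth wE] := connected_conn cG (in_setT x) (in_setT w).
  by rewrite wE eqxx in wx.
by case/andP: pth => /and3P[exc _ _] _; exists c.
Qed.

Lemma biconnectedb_hubs X :
  (exists2 h, h \in X & forall z, z \in X -> conn X z h) ->
  (forall w, w \in X -> exists h, forall z, z \in X :\ w -> conn (X :\ w) z h) ->
  biconnectedb e X.
Proof.
move=> [h hX hubX] hubD; apply/andP; split.
  apply/andP; split; first by apply/set0Pn; exists h.
  apply/forall_inP=> x xX; apply/forall_inP=> y yX.
  by apply: connect_trans (hubX x xX) _; rewrite conn_sym hubX.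
apply/forall_inP=> w wX; rewrite /cut_vertexb wX /=.
apply/negP=> /exists_inP[x xXw /exists_inP[y yXw /negP]]; apply.
have [h' hub'] := hubD w wX.
by apply: connect_trans (hub' x xXw) _; rewrite conn_sym hub'.
Qed.

Lemma biconnected_conn A x y : biconnectedb e A -> x \in A -> y \in A -> conn A x y.
Proof. by case/andP=> cA _; apply: connected_conn. Qed.

Lemma biconnected_connD1 A w x y : biconnectedb e A -> x \in A -> y \in A ->
  x != w -> y != w -> conn (A :\ w) x y.
Proof.
move=> bA xA yA xw yw; have [wA|wNA] := boolP (w \in A).
  case/andP: bA => _ /forall_inP/(_ w wA); rewrite /cut_vertexb wA negb_exists.
  move=> /forallP/(_ x); rewrite in_setD1 xw xA negb_exists /=.
  by move=> /forallP/(_ y); rewrite in_setD1 yw yA negbK.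
apply: conn_sub (biconnected_conn bA xA yA); apply/subsetP=> u uA.
by rewrite in_setD1 uA andbT; apply: contraNneq wNA => <-.
Qed.

Lemma biconnected_set1 v : biconnectedb e [set v].
Proof.
apply: biconnectedb_hubs; first by exists v; rewrite ?inE // => z /set1P->.
by move=> w _; exists v => z; rewrite !inE => /andP[_ /eqP->].
Qed.

Lemma biconnected_set2 x y : e x y -> biconnectedb e [set x; y].
Proof.
move=> exy; apply: biconnectedb_hubs.
  exists x; rewrite ?inE ?eqxx // => z /set2P[]->//.
  by apply: conn_edge; rewrite ?inE ?eqxx ?orbT // e_sym.
move=> w _; have [->|wx] := eqVneq w x.
  by exists y => z; rewrite !inE => /andP[zx /orP[/eqP zE|/eqP->]]; rewrite ?zE ?eqxx in zx.
exists x => z; rewrite !inE => /andP[zw /orP[/eqP->//|/eqP zy]]; subst z.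
by apply: conn_edge; rewrite 1?e_sym // !inE eqxx ?orbT ?andbT // eq_sym.
Qed.

Lemma block_biconnected B : blockb e B -> biconnectedb e B.
Proof. by case/andP. Qed.

Lemma block_maximal B S : blockb e B -> B \subset S -> biconnectedb e S -> S = B.
Proof. by case/andP=> _ /forallP/(_ S)/implyP H sBS bS; apply/eqP/H; rewrite sBS. Qed.

Lemma biconnected_sub_block S : biconnectedb e S -> exists2 B, blockb e B & S \subset B.
Proof.
move=> bS; pose P S' := (S \subset S') && biconnectedb e S'.
have [B /andP[sSB bB] Bmax] := @arg_maxnP _ S P (fun S' => #|S'|) (introT andP (conj (subxx S) bS)).
exists B => //; rewrite /blockb bB; apply/forall_inP=> S' /andP[sBS' bS'].
by rewrite eq_sym eqEcard sBS'; apply: Bmax; rewrite /P bS' (subset_trans sSB sBS').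
Qed.

Lemma conn_path_mem A A' a p u : path (induced e A) a p ->
  {subset a :: p <= A'} -> u \in a :: p -> conn A' a u.
Proof.
move=> pth sub; apply: path_connect; apply: (@sub_in_path _ [in A']) pth => [x y xA' yA'|].
  by case/and3P=> exy _ _; rewrite /induced /= exy xA' yA'.
by apply/allP.
Qed.

Lemma conn_path_avoid A X w a p u : path (induced e A) a p -> uniq (a :: p) ->
  {subset a :: p <= X} -> u \in a :: p -> u != w ->
  conn (X :\ w) a u || conn (X :\ w) u (last a p).
Proof.
elim: p a => [|c p IH] a /=; first by move=> _ _ _; rewrite inE => /eqP-> _; rewrite connect0.
move=> /andP[/and3P[eac _ _] pth] /andP[aNp up] sub.
have subc : {subset c :: p <= X} by move=> z zp; rewrite sub // inE zp orbT.
rewrite inE => /orP[/eqP-> _|up' uw]; first by rewrite connect0.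
case/orP: (IH c pth up subc up' uw) => [cu|->]; last by rewrite orbT.
have [aw|aw] := eqVneq a w; [apply/orP; right | apply/orP; left].
  have subcw : {subset c :: p <= X :\ w}.
    by move=> z zp; rewrite in_setD1 subc // andbT; apply: contraNneq aNp => zw; rewrite aw -zw.
  apply: connect_trans (conn_path_mem pth subcw (mem_last c p)).
  by rewrite conn_sym (conn_path_mem pth subcw up').
have cw := conn_mem_neq cu uw.
apply: connect_trans cu; apply: conn_edge eac _ _;
  by rewrite in_setD1 ?aw ?cw sub // !inE eqxx ?orbT.
Qed.

Lemma biconnected_union_path B1 B2 v a p :
  biconnectedb e B1 -> biconnectedb e B2 -> v \in B1 -> v \in B2 ->
  a \in B1 -> a != v -> path (induced e (setT :\ v)) a p -> uniq (a :: p) ->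
  last a p \in B2 -> biconnectedb e (B1 :|: B2 :|: [set u in a :: p]).
Proof.
move=> bB1 bB2 vB1 vB2 aB1 av pth up bB2'; set b := last a p in bB2'.
set X := B1 :|: B2 :|: _.
have memX z : (z \in X) = [|| z \in B1, z \in B2 | z \in a :: p] by rewrite !in_setU in_set orbA.
have pX : {subset a :: p <= X} by move=> z zp; rewrite memX zp !orbT.
have sB1 : B1 \subset X by apply/subsetP=> z zB; rewrite memX zB.
have sB2 : B2 \subset X by apply/subsetP=> z zB; rewrite memX zB orbT.
have pv z : z \in a :: p -> z != v.
  by rewrite inE => /orP[/eqP->//|/(path_induced_mem pth)]; rewrite in_setD1 => /andP[].
apply: biconnectedb_hubs.
  exists v => [|z]; first by rewrite memX vB1.
  rewrite memX => /or3P[zB|zB|zp].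
  - exact: conn_sub sB1 (biconnected_conn bB1 zB vB1).
  - exact: conn_sub sB2 (biconnected_conn bB2 zB vB2).
  - apply: (connect_trans (y := a)); last exact: conn_sub sB1 (biconnected_conn bB1 aB1 vB1).
    by rewrite conn_sym (conn_path_mem pth pX zp).
move=> w _; have [->|wv] := eqVneq w v.
  have pXv : {subset a :: p <= X :\ v} by move=> z zp; rewrite in_setD1 pv ?pX.
  exists a => z; rewrite in_setD1 memX => /andP[zv /or3P[zB|zB|zp]].
  - exact: conn_sub (setSD _ sB1) (biconnected_connD1 bB1 zB aB1 zv av).
  - apply: connect_trans (conn_sub (setSD _ sB2) (biconnected_connD1 bB2 zB bB2' zv _)) _.
      exact/pv/mem_last.
    by rewrite conn_sym (conn_path_mem pth pXv (mem_last a p)).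
  - by rewrite conn_sym (conn_path_mem pth pXv zp).
have vw : v != w by rewrite eq_sym.
exists v => z; rewrite in_setD1 memX => /andP[zw /or3P[zB|zB|zp]].
- exact: conn_sub (setSD _ sB1) (biconnected_connD1 bB1 zB vB1 zw vw).
- exact: conn_sub (setSD _ sB2) (biconnected_connD1 bB2 zB vB2 zw vw).
- case/orP: (conn_path_avoid pth up pX zp zw) => [caz|czb].
    have aw := conn_mem_neq caz zw; rewrite conn_sym in caz.
    exact: connect_trans caz (conn_sub (setSD _ sB1) (biconnected_connD1 bB1 aB1 vB1 aw vw)).
  have bw : b != w by apply: (@conn_mem_neq X _ z); rewrite 1?conn_sym.
  exact: connect_trans czb (conn_sub (setSD _ sB2) (biconnected_connD1 bB2 bB2' vB2 bw vw)).
Qed.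

Lemma blocks_separated B1 B2 v a b : blockb e B1 -> blockb e B2 -> B1 != B2 ->
  v \in B1 -> v \in B2 -> a \in B1 -> b \in B2 -> a != v ->
  ~~ conn (setT :\ v) a b.
Proof.
move=> blB1 blB2 B12 vB1 vB2 aB1 + av; apply/contraL=> /connectP[p0 pth0 ->].
case: (shortenP pth0) => p pth up _; apply/negP=> bB2.
have bX := biconnected_union_path (block_biconnected blB1) (block_biconnected blB2)
  vB1 vB2 aB1 av pth up bB2.
have EB1 := block_maximal blB1 (subset_trans (subsetUl _ _) (subsetUl _ _)) bX.
have sB21 : B2 \subset B1 by rewrite -EB1 -setUA subsetU // subsetUl orbT.
by rewrite (block_maximal blB2 sB21 (block_biconnected blB1)) eqxx in B12.
Qed.

Lemma eq_block_shared2 B1 B2 x y : blockb e B1 -> blockb e B2 ->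
  x \in B1 -> x \in B2 -> y \in B1 -> y \in B2 -> x != y -> B1 = B2.
Proof.
move=> blB1 blB2 xB1 xB2 yB1 yB2 xy; apply/eqP/contraT=> B12.
have yx : y != x by rewrite eq_sym.
by have := blocks_separated blB1 blB2 B12 xB1 xB2 yB1 yB2 yx; rewrite connect0.
Qed.

Lemma edge_in_block x y : e x y -> exists B, [/\ blockb e B, x \in B & y \in B].
Proof.
move=> exy; have [B blB sB] := biconnected_sub_block (biconnected_set2 exy).
by exists B; split=> //; apply: (subsetP sB); rewrite !inE eqxx ?orbT.
Qed.

Hypothesis no_isolated : forall x, exists y, e x y.

Lemma block_neq B v : blockb e B -> exists2 a, a \in B & a != v.
Proof.
move=> blB; apply/exists_inP/contraT; rewrite negb_exists_in => /forall_inP Bv.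
have [c evc] := no_isolated v.
have sB : B \subset [set v; c].
  by apply/subsetP=> u /Bv; rewrite negbK => /eqP->; rewrite !inE eqxx.
have cB : c \in B by rewrite -(block_maximal blB sB (biconnected_set2 evc)) !inE eqxx orbT.
by move: evc (Bv c cB); rewrite negbK => + /eqP cv; rewrite cv e_irr.
Qed.

Lemma blocks_shared_cut B1 B2 x : blockb e B1 -> blockb e B2 -> B1 != B2 ->
  x \in B1 -> x \in B2 -> cut_vertexb e setT x.
Proof.
move=> blB1 blB2 B12 xB1 xB2.
have [a aB1 ax] := block_neq x blB1; have [b bB2 bx] := block_neq x blB2.
rewrite /cut_vertexb in_setT; apply/exists_inP; exists a; first by rewrite in_setD1 ax in_setT.
apply/exists_inP; exists b; first by rewrite in_setD1 bx in_setT.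
exact: blocks_separated blB1 blB2 B12 xB1 xB2 aB1 bB2 ax.
Qed.

Hypothesis G_conn : connectedb e setT.

Local Notation node := (btnode T).
Local Notation adj := (bt_adj e).
Local Notation d := (bt_dist e).
Local Notation N := #|{: {set T} + T}|.
Implicit Types (r n m : node).

Definition bt_node n : bool :=
  match n with inl B => blockb e B | inr v => cut_vertexb e setT v end.

Definition bt_part n : {set T} :=
  match n with inl B => B | inr v => [set v] end.

Definition block_node n : bool := if n is inl _ then true else false.

Lemma bt_adj_sym : symmetric adj.
Proof. by move=> [B|v] [B'|v']. Qed.

Lemma bt_adj_node n m : adj n m -> bt_node n && bt_node m.
Proof. by case: n m => [B|v] [B'|v'] //= /and3P[-> ->]. Qed.

Lemma bt_adj_block_node n m : adj n m -> block_node n != block_node m.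
Proof. by case: n m => [B|v] [B'|v']. Qed.

Lemma within_succ r k n : within e r k n -> within e r k.+1 n.
Proof. by move=> /= ->. Qed.

Lemma within_mono r k k' n : k <= k' -> within e r k n -> within e r k' n.
Proof.
elim: k' => [|k' IH]; first by rewrite leqn0 => /eqP->.
by rewrite leq_eqVlt => /orP[/eqP->//|/IH wk /wk]; apply: within_succ.
Qed.

Lemma within_adj r k n m : adj n m -> within e r k m -> within e r k.+1 n.
Proof. by move=> anm wm /=; apply/orP; right; apply/existsP; exists m; rewrite anm wm. Qed.

Lemma withinSP r k n : within e r k.+1 n ->
  within e r k n \/ exists2 m, adj n m & within e r k m.
Proof. by case/orP=> [|/existsP[m /andP[anm wm]]]; [left | right; exists m]. Qed.

Lemma within_path n p : path adj n p -> within e (last n p) (size p) n.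
Proof.
elim: p n => [|m p IH] n /=; first by rewrite eqxx.
by case/andP=> anm /IH; apply: within_adj.
Qed.

Lemma bt_connect_shared B1 B2 u : blockb e B1 -> blockb e B2 -> u \in B1 -> u \in B2 ->
  connect adj (inl B1) (inl B2).
Proof.
move=> blB1 blB2 uB1 uB2; have [->|B12] := eqVneq B1 B2; first exact: connect0.
have cu := blocks_shared_cut blB1 blB2 B12 uB1 uB2.
by apply: (connect_trans (y := inr u)); apply: connect1; rewrite /= ?blB1 ?blB2 cu.
Qed.

Lemma bt_connect_path a p B1 B2 : path (induced e setT) a p ->
  blockb e B1 -> blockb e B2 -> a \in B1 -> last a p \in B2 -> connect adj (inl B1) (inl B2).
Proof.
elim: p a B1 => [|c p IH] a B1 /=; first by move=> _; apply: bt_connect_shared.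
case/andP=> /and3P[eac _ _] pth blB1 blB2 aB1 lB2.
have [B [blB aB cB]] := edge_in_block eac.
exact: connect_trans (bt_connect_shared blB1 blB aB1 aB) (IH c B pth blB blB2 cB lB2).
Qed.

Lemma bt_connect_blocks B1 B2 : blockb e B1 -> blockb e B2 -> connect adj (inl B1) (inl B2).
Proof.
move=> blB1 blB2.
have /andP[/andP[/set0Pn[a aB1] _] _] := block_biconnected blB1.
have /andP[/andP[/set0Pn[b bB2] _] _] := block_biconnected blB2.
have /connectP[p pth bE] := connected_conn G_conn (in_setT a) (in_setT b).
by apply: bt_connect_path pth blB1 blB2 aB1 _; rewrite -bE.
Qed.

Lemma bt_connect_node n : bt_node n -> exists2 B, blockb e B & connect adj n (inl B).
Proof.
case: n => [B|v] /= nv; first by exists B; rewrite ?connect0.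
have [B blB sB] := biconnected_sub_block (biconnected_set1 v); exists B => //.
by apply: connect1; rewrite /= blB nv (subsetP sB) ?set11.
Qed.

Lemma bt_connect n m : bt_node n -> bt_node m -> connect adj n m.
Proof.
move=> /bt_connect_node[B blB cnB] /bt_connect_node[B' blB' cmB'].
apply: connect_trans cnB (connect_trans (bt_connect_blocks blB blB') _).
by rewrite (sym_connect_sym bt_adj_sym).
Qed.

Lemma within_card r n : bt_node r -> bt_node n -> within e r N n.
Proof.
move=> nr nn; have /connectP[p0 pth0 ->] := bt_connect nn nr.
case: (shortenP pth0) => p pth up _; apply: within_mono (within_path pth).
by have := max_card (mem (n :: p)); rewrite (card_uniqP up) => /ltnW.
Qed.

Lemma bt_distP r n : bt_node r -> bt_node n ->
  within e r (d r n) n /\ forall k, k < d r n -> ~~ within e r k n.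
Proof.
move=> nr nn; rewrite /bt_dist; set s := iota 0 N.+1.
have hs : has (within e r ^~ n) s.
  by apply/hasP; exists N; [rewrite mem_iota add0n leq0n ltnSn | apply: within_card].
split; first by have := nth_find 0 hs; rewrite nth_iota // -(size_iota 0 N.+1) -has_find.
move=> k ltk; have := before_find 0 ltk; rewrite nth_iota ?add0n => [->//|].
by apply: ltn_trans ltk _; rewrite -(size_iota 0 N.+1) -has_find.
Qed.

Lemma bt_dist_min r n k : bt_node r -> bt_node n -> within e r k n -> d r n <= k.
Proof. by move=> nr nn wk; rewrite leqNgt; apply: contraL wk; apply: (bt_distP nr nn).2. Qed.

Lemma within_parity r k n : within e r k n -> (k == 0) || ~~ within e r k.-1 n ->
  odd k = (block_node n != block_node r).
Proof.
elim: k n => [|k IH] n; first by move=> /= /eqP-> _; rewrite eqxx.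
move=> /withinSP[-> //|[m anm wm]] /= nwk.
have nwm : (k == 0) || ~~ within e r k.-1 m.
  by case: k {IH wm} nwk => [|k] //= nwk; apply: contra nwk; apply: within_adj.
rewrite (IH m wm nwm); move: (bt_adj_block_node anm).
by case: (block_node n); case: (block_node m); case: (block_node r).
Qed.

Lemma odd_bt_dist r n : bt_node r -> bt_node n -> odd (d r n) = (block_node n != block_node r).
Proof.
move=> nr nn; have [wd wlt] := bt_distP nr nn; apply: within_parity wd _.
by case: (d r n) wlt => [|k] // wlt; rewrite wlt.
Qed.

Lemma bt_dist_adj r n m : bt_node r -> adj n m -> d r n = (d r m).+1 \/ d r m = (d r n).+1.
Proof.
move=> nr anm; have /andP[nn nm] := bt_adj_node anm.
have amn : adj m n by rewrite bt_adj_sym.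
have le_nm := bt_dist_min nr nn (within_adj anm (bt_distP nr nm).1).
have le_mn := bt_dist_min nr nm (within_adj amn (bt_distP nr nn).1).
have : d r n != d r m.
  apply: contra_neq (bt_adj_block_node anm) => Enm.
  have := odd_bt_dist nr nn; rewrite Enm odd_bt_dist //.
  by case: (block_node n); case: (block_node m); case: (block_node r).
lia.
Qed.

Lemma bt_dist_eq0 r n : bt_node r -> bt_node n -> (d r n == 0) = (n == r).
Proof.
move=> nr nn; apply/eqP/eqP=> [E|->]; first by have := (bt_distP nr nn).1; rewrite E => /eqP.
by apply/eqP; rewrite -leqn0 bt_dist_min //= eqxx.
Qed.

Lemma bt_dist_root r : bt_node r -> d r r = 0.
Proof. by move=> nr; apply/eqP; rewrite bt_dist_eq0. Qed.

Lemma bt_part_conn n v x y : bt_node n -> x \in bt_part n -> y \in bt_part n ->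
  x != v -> y != v -> connect (induced e (setT :\ v)) x y.
Proof.
case: n => [B|u] /= nn xn yn xv yv.
  exact: conn_sub (setSD _ (subsetT B)) (biconnected_connD1 (block_biconnected nn) xn yn xv yv).
by move: xn yn; rewrite !inE => /eqP-> /eqP->.
Qed.

Lemma conn_towards_root r v k n x b : bt_node r -> within e r k n -> ~~ within e r k (inr v) ->
  x \in bt_part n -> b \in bt_part r -> x != v -> b != v ->
  connect (induced e (setT :\ v)) x b.
Proof.
move=> nr; elim: k n x => [|k IH] n x; first by move=> /= /eqP-> _; apply: bt_part_conn.
move=> wn wv; have wv' : ~~ within e r k (inr v) by apply: contra wv; apply: within_succ.
case/withinSP: (wn) => [wkn|[m anm wm]]; first exact: IH wkn wv'.
case: n m anm wm wn => [B|u] [B'|u'] //= /and3P[blB _ uB] wm wn xn bn xv bv.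
  have u'v : u' != v by apply: contraNneq wv' => <-.
  apply: connect_trans (bt_part_conn (n := inl B) blB xn uB xv u'v) _.
  by apply: (IH (inr u')); rewrite ?inE.
have uv : u != v by apply: contraNneq wv => <-.
by move: xn; rewrite inE => /eqP->; apply: (IH (inl B')).
Qed.

Lemma bt_part_neq r v k : bt_node r -> ~~ within e r k (inr v) ->
  exists2 b, b \in bt_part r & b != v.
Proof.
case: r => [B|u] /= nr wv; first exact: block_neq.
exists u; rewrite ?inE //; apply: contraNneq wv => ->.
by apply: within_mono (leq0n k) _; rewrite /= eqxx.
Qed.

Lemma conn_within_avoid r v k n1 n2 x1 x2 : bt_node r ->
  within e r k n1 -> within e r k n2 -> ~~ within e r k (inr v) ->
  x1 \in bt_part n1 -> x2 \in bt_part n2 -> x1 != v -> x2 != v ->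
  connect (induced e (setT :\ v)) x1 x2.
Proof.
move=> nr wn1 wn2 wv x1n x2n x1v x2v.
have [b bn bv] := bt_part_neq nr wv.
apply: connect_trans (conn_towards_root nr wn1 wv x1n bn x1v bv) _.
by rewrite conn_sym (conn_towards_root nr wn2 wv x2n bn x2v bv).
Qed.

Lemma within_parent_unique r k n m1 m2 : bt_node r ->
  within e r k m1 -> within e r k m2 -> ~~ within e r k n ->
  adj n m1 -> adj n m2 -> m1 = m2.
Proof.
move=> nr; case: n => [B|v]; case: m1 => [B1|u1] //; case: m2 => [B2|u2] // wm1 wm2 wn a1 a2.
  case: k wm1 wm2 wn => [|k] wm1 wm2 wn; first by move: wm1 wm2 => /= /eqP-> /eqP->.
  have [->//|u12] := eqVneq u1 u2; case/and3P: (a1) => blB _ u1B; case/and3P: (a2) => _ _ u2B.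
  have wu1 : ~~ within e r k (inr u1) by apply: contra wn; apply: within_adj a1.
  have [[C1|] // aC1 wC1] : exists2 n1, adj (inr u1) n1 & within e r k n1.
    by case/withinSP: wm1 => // wu1'; rewrite wu1' in wu1.
  case/and3P: aC1 => blC1 _ u1C1.
  have BC1 : B != C1 by apply: contraNneq wn => ->; apply: within_succ.
  have [a aC1 au1] := block_neq u1 blC1.
  have [n2 wn2 u2n2] : exists2 n2, within e r k n2 & u2 \in bt_part n2.
    case/withinSP: wm2 => [wu2|[[C2|//] /and3P[_ _ u2C2] wC2]]; last by exists (inl C2).
    by exists (inr u2); rewrite ?inE.
  have u21 : u2 != u1 by rewrite eq_sym.
  have := blocks_separated blB blC1 BC1 u1B u1C1 u2B aC1 u21.
  by rewrite (conn_within_avoid nr wn2 wC1 wu1 u2n2 aC1 u21 au1).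
have [->//|B12] := eqVneq B1 B2; case/and3P: a1 => blB1 _ vB1; case/and3P: a2 => blB2 _ vB2.
have [a aB1 av] := block_neq v blB1; have [b bB2 bv] := block_neq v blB2.
have := blocks_separated blB1 blB2 B12 vB1 vB2 aB1 bB2 av.
by rewrite (conn_within_avoid nr wm1 wm2 wn aB1 bB2 av bv).
Qed.

Lemma rooted_arc_dist r n m : bt_node r -> rooted_arc e r n m -> d r n = (d r m).+1.
Proof.
move=> nr /andP[anm lt]; case: (bt_dist_adj nr anm) => // E.
by rewrite E ltnNge leqnSn in lt.
Qed.

Lemma rooted_arc_flip r n m : bt_node r -> adj n m -> rooted_arc e r m n = ~~ rooted_arc e r n m.
Proof.
move=> nr anm; rewrite /rooted_arc anm bt_adj_sym anm /=.
by case: (bt_dist_adj nr anm) => ->; rewrite ltnSn ltnNge leqnSn.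
Qed.

Lemma rooted_arc_unique r n m1 m2 : bt_node r ->
  rooted_arc e r n m1 -> rooted_arc e r n m2 -> m1 = m2.
Proof.
move=> nr a1 a2; have E1 := rooted_arc_dist nr a1; have := rooted_arc_dist nr a2.
rewrite E1 => -[E12]; case/andP: a1 a2 => an1 _ /andP[an2 _].
have /andP[nn nm1] := bt_adj_node an1; have /andP[_ nm2] := bt_adj_node an2.
apply: (within_parent_unique nr (bt_distP nr nm1).1 _ _ an1 an2).
  by rewrite E12; apply: (bt_distP nr nm2).1.
by apply: (bt_distP nr nn).2; rewrite E1.
Qed.

Lemma rooted_arc_exists r n : bt_node r -> bt_node n -> n != r -> exists m, rooted_arc e r n m.
Proof.
move=> nr nn; rewrite -(bt_dist_eq0 nr nn); case E: (d r n) => [|k] // _.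
have [wd wlt] := bt_distP nr nn; rewrite E in wd wlt; have wk := wlt k (ltnSn k).
case/withinSP: wd => [wk'|[m anm wm]]; first by rewrite wk' in wk.
have /andP[_ nm] := bt_adj_node anm.
by exists m; rewrite /rooted_arc anm E ltnS bt_dist_min.
Qed.

Section TreeOrientation.

Variable R : rel node.
Hypothesis R_adj : forall n m, R n m -> adj n m.
Hypothesis R_flip : forall n m, adj n m -> R m n = ~~ R n m.
Hypothesis R_out : forall n m1 m2, R n m1 -> R n m2 -> m1 = m2.

Lemma bt_node_exists : exists r, bt_node r.
Proof.
have /andP[/set0Pn[x _] _] := G_conn.
by have [B blB _] := biconnected_sub_block (biconnected_set1 x); exists (inl B).
Qed.

(* Without a sink, following out-arcs from the root [r0] would descend forever. *)
Lemma orientation_sink : exists2 r, bt_node r & forall m, ~~ R r m.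
Proof.
case: (pickP [pred r | bt_node r && [forall m, ~~ R r m]]) => [r /andP[nr /forallP]|noR].
  by exists r.
have out n : bt_node n -> exists m, R n m.
  move=> nn; have := noR n; rewrite /= nn => /negbT/forallPn[m]; rewrite negbK.
  by exists m.
have [r0 nr0] := bt_node_exists.
have deep k : exists n m, [/\ R n m, rooted_arc e r0 m n & k <= d r0 m].
  elim: k => [|k [n [m [Rnm amn le_km]]]].
    have [m Rr0m] := out r0 nr0; exists r0, m; split=> //.
    rewrite rooted_arc_flip ?R_adj // /rooted_arc negb_and.
    by rewrite bt_dist_root // ltn0 orbT.
  have /andP[_ nm] := bt_adj_node (R_adj Rnm).
  have [m' Rmm'] := out m nm.
  have [am'm|] := boolP (rooted_arc e r0 m' m).
    by exists m, m'; split; rewrite // (rooted_arc_dist nr0 am'm).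
  rewrite rooted_arc_flip ?R_adj // negbK => amm'.
  move/(rooted_arc_unique nr0 amn): amm' => Enm; subst m'.
  by have := R_flip (R_adj Rnm); rewrite Rnm Rmm'.
have [n [m [_ amn le_m]]] := deep N.+1.
have /andP[nm _] := bt_adj_node (andP amn).1.
by have := leq_trans le_m (bt_dist_min nr0 nm (within_card nr0 nm)); rewrite ltnn.
Qed.

Lemma orientation_rooted r : bt_node r -> (forall m, ~~ R r m) ->
  forall n m, rooted_arc e r n m -> R n m.
Proof.
move=> nr sink n m; move Ek: (d r m) => k; elim: k n m Ek => [|k IH] n m Ek anm.
  have /andP[_ nm] := bt_adj_node (andP anm).1.
  move/eqP: Ek; rewrite bt_dist_eq0 // => /eqP Emr; subst m.
  by have := R_flip (andP anm).1; rewrite (negbTE (sink n)) => /esym/negbFE.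
have /andP[_ nm] := bt_adj_node (andP anm).1.
have mr : m != r by rewrite -(bt_dist_eq0 nr nm) Ek.
have [c amc] := rooted_arc_exists nr nm mr.
have Emc := rooted_arc_dist nr amc.
have Rmc : R m c by apply: IH amc; move: Emc; rewrite Ek => -[].
rewrite R_flip; last by rewrite bt_adj_sym (andP anm).1.
apply/negP=> /R_out/(_ Rmc) Enc; subst c.
by have := rooted_arc_dist nr anm; lia.
Qed.

End TreeOrientation.

Section Necessity.

Variable D : rel T.
Hypothesis D_orient : orientation_of e setT D.
Hypothesis D_perfect : one_perfect e D.

Definition restrict B : rel T := [rel x y | [&& D x y, x \in B & y \in B]].

Lemma D_edge x y : D x y -> e x y.
Proof. by case/D_orient.1/and3P. Qed.

Lemma D_total x y : e x y -> D x y || D y x.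
Proof.
move=> exy; have := D_orient.2 x y; rewrite /induced /= exy !in_setT => /(_ isT).
by case: (D x y); case: (D y x).
Qed.

Lemma restrict_orientation B : orientation_of e B (restrict B) /\ one_perfect e (restrict B).
Proof.
split; first split.
- by move=> x y /and3P[/D_edge exy xB yB]; rewrite /induced /= exy xB yB.
- move=> x y /and3P[exy xB yB]; rewrite /restrict /= xB yB !andbT.
  by apply: D_orient.2; rewrite /induced /= exy !in_setT.
by move=> x y z /and3P[Dxy _ _] /and3P[Dxz _ _]; apply: (D_perfect Dxy Dxz).
Qed.

(* [y] is adjacent to the successor of [x] on its path to [s], by 1-perfectness. *)
Lemma reach_sink_out B s x y : (forall z, ~~ restrict B s z) ->
  connect (restrict B) x s -> restrict B x y -> connect (restrict B) y s.
Proof.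
move=> sink /connectP[p pth Es]; elim: p x pth Es => [|c p IH] x /=.
  by move=> _ <- Rsy; case/negP: (sink y).
move=> /andP[Rxc pth] Es Rxy.
have [->|yc] := eqVneq y c; first by apply/connectP; exists p.
have /and3P[Dxy _ yB] := Rxy; have /and3P[Dxc _ cB] := Rxc.
case/orP: (D_total (D_perfect Dxy Dxc yc)) => [Dyc|Dcy].
  apply: (connect_trans (y := c)); last by apply/connectP; exists p.
  by apply: connect1; rewrite /restrict /= Dyc yB cB.
by apply: IH pth Es _; rewrite /restrict /= Dcy cB yB.
Qed.

Lemma sink_unique B s1 s2 : connectedb e B -> s1 \in B -> s2 \in B ->
  (forall y, ~~ restrict B s1 y) -> (forall y, ~~ restrict B s2 y) -> s1 = s2.
Proof.
move=> cB s1B s2B sink1 sink2.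
have clS : closed (induced e B) (connect (restrict B) ^~ s1).
  apply: intro_closed; first exact: sym_connect_sym (@induced_sym B).
  move=> x y /and3P[exy xB yB] xS; case/orP: (D_total exy) => [Dxy|Dyx].
    by apply: reach_sink_out sink1 xS _; rewrite /restrict /= Dxy xB yB.
  by apply: connect_trans xS; apply: connect1; rewrite /restrict /= Dyx yB xB.
have := closed_connect clS (connected_conn cB s1B s2B).
rewrite [in X in X = _]unfold_in /= connect0 => /esym/connectP[[|c p] /= pth Es] //.
by rewrite (negbTE (sink2 c)) in pth.
Qed.

Definition out_in v B : bool := [exists y in B, D v y].

Definition bt_orient : rel node := fun n m =>
  adj n m && match n, m with
             | inr v, inl B => out_in v B
             | inl B, inr v => ~~ out_in v B
             | _, _ => false
             end.

Lemma bt_orient_adj n m : bt_orient n m -> adj n m.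
Proof. by case/andP. Qed.

Lemma bt_orient_flip n m : adj n m -> bt_orient m n = ~~ bt_orient n m.
Proof. by case: n m => [B|v] [B'|v'] // anm; rewrite /bt_orient anm bt_adj_sym anm ?negbK. Qed.

Lemma out_inPn v B : ~~ out_in v B -> forall y, ~~ restrict B v y.
Proof. by move=> /exists_inPn Nv y; apply/and3P=> -[Dvy _ yB]; move: (Nv y yB); rewrite Dvy. Qed.

Lemma bt_orient_out n m1 m2 : bt_orient n m1 -> bt_orient n m2 -> m1 = m2.
Proof.
case: n m1 m2 => [B|v] [B1|u1] [B2|u2] //.
all: move=> /andP[/and3P[bl1 _ in1] out1] /andP[/and3P[bl2 _ in2] out2].
  by congr inr; apply: sink_unique (andP (block_biconnected bl1)).1 in1 in2 _ _; apply: out_inPn.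
have [->//|B12] := eqVneq B1 B2.
have /exists_inP[y1 y1B1 Dvy1] := out1; have /exists_inP[y2 y2B2 Dvy2] := out2.
have yv y : D v y -> y != v by move=> /D_edge; apply: contraTneq => ->; rewrite e_irr.
have := blocks_separated bl1 bl2 B12 in1 in2 y1B1 y2B2 (yv _ Dvy1).
have [->|y12] := eqVneq y1 y2; first by rewrite connect0.
by rewrite (conn_edge (D_perfect Dvy1 Dvy2 y12)) // in_setD1 in_setT andbT yv.
Qed.

Lemma orientation_rooted_blocks : exists2 r, bt_node r &
  forall B v, rooted_arc e r (inl B) (inr v) -> rooted_one_perfectly_orientable e B v.
Proof.
have [r nr sink] := orientation_sink bt_orient_adj bt_orient_flip.
exists r => // B v arc; have [orient perfect] := restrict_orientation B.
exists (restrict B); split=> //; apply: out_inPn.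
by case/andP: (orientation_rooted bt_orient_flip bt_orient_out nr sink arc).
Qed.

End Necessity.

Definition glue (F : {set T} -> rel T) : rel T := fun x y => [exists B, blockb e B && F B x y].

Section Glue.

Variable F : {set T} -> rel T.
Hypothesis F_orient : forall B, blockb e B -> orientation_of e B (F B).

Lemma glue_in_block B x y : blockb e B -> x \in B -> y \in B -> x != y ->
  glue F x y = F B x y.
Proof.
move=> blB xB yB xy; apply/existsP/idP => [[B' /andP[blB' FB']]|FB]; last by exists B; rewrite blB.
have /and3P[_ xB' yB'] := (F_orient blB').1 x y FB'.
by rewrite -(eq_block_shared2 blB' blB xB' xB yB' yB xy).
Qed.

Lemma glue_orientation : orientation_of e setT (glue F).
Proof.
split=> [x y /existsP[B /andP[blB /(F_orient blB).1/and3P[exy _ _]]]|x y /and3P[exy _ _]].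
  by rewrite /induced /= exy !in_setT.
have [B [blB xB yB]] := edge_in_block exy.
have xy : x != y by apply: contraTneq exy => ->; rewrite e_irr.
rewrite (glue_in_block blB xB yB xy) (glue_in_block blB yB xB) 1?eq_sym //.
by apply: (F_orient blB).2; rewrite /induced /= e_sym exy xB yB.
Qed.

Lemma glue_one_perfect : (forall B, blockb e B -> one_perfect e (F B)) ->
  (forall B1 B2 x y1 y2, blockb e B1 -> blockb e B2 -> F B1 x y1 -> F B2 x y2 -> B1 = B2) ->
  one_perfect e (glue F).
Proof.
move=> F_perfect out_block x y z /existsP[B1 /andP[bl1 F1]] /existsP[B2 /andP[bl2 F2]].
have E12 := out_block _ _ _ _ _ bl1 bl2 F1 F2; rewrite -E12 in F2.
exact: (F_perfect B1 bl1 x y z F1 F2).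
Qed.

End Glue.

Section Sufficiency.

Variable r : node.
Hypothesis nr : bt_node r.
Hypothesis root_orientable : forall Br, r = inl Br -> one_perfectly_orientable_on e Br.
Hypothesis arcs_orientable : forall B v, blockb e B -> cut_vertexb e setT v ->
  rooted_arc e r (inl B) (inr v) -> rooted_one_perfectly_orientable e B v.

(* Stated for every set [B], so that [choice] yields one orientation per block. *)
Lemma block_orientation_rooted B : exists D, blockb e B ->
  [/\ orientation_of e B D, one_perfect e D &
       forall v, rooted_arc e r (inl B) (inr v) -> forall y, ~~ D v y].
Proof.
have [blB|nbl] := boolP (blockb e B); last by exists (fun _ _ => false) => blB; case/negP: nbl.
have [Er|Br] := eqVneq (inl B) r.
  have [D [orient perfect]] := root_orientable (esym Er).
  by exists D => _; split=> // v; rewrite -Er /rooted_arc bt_dist_root ?ltn0 ?andbF.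
have [[//|v] arc] := rooted_arc_exists (n := inl B) nr blB Br.
have /and3P[_ cv _] := (andP arc).1.
have [D [orient perfect sink]] := arcs_orientable blB cv arc.
by exists D => _; split=> // w /(rooted_arc_unique nr arc) [<-].
Qed.

Lemma rooted_blocks_orientable : one_perfectly_orientable_on e setT.
Proof.
have [F HF] := ClassicalEpsilon.choice _ block_orientation_rooted.
have F_orient B : blockb e B -> orientation_of e B (F B) by case/HF.
exists (glue F); split; first exact: glue_orientation.
apply: glue_one_perfect => [B /HF[] //|B1 B2 x y1 y2 bl1 bl2 F1 F2].
have /and3P[_ x1 _] := (F_orient B1 bl1).1 x y1 F1.
have /and3P[_ x2 _] := (F_orient B2 bl2).1 x y2 F2.
apply/eqP/contraT=> B12; have cx := blocks_shared_cut bl1 bl2 B12 x1 x2.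
have parent B y : blockb e B -> x \in B -> F B x y -> rooted_arc e r (inr x) (inl B).
  move=> blB xB FB; rewrite rooted_arc_flip /= ?blB ?cx ?xB //.
  by apply/negP=> arc; have [_ _ sink] := HF B blB; rewrite (negbTE (sink x arc y)) in FB.
have [E] := rooted_arc_unique nr (parent _ _ bl1 x1 F1) (parent _ _ bl2 x2 F2).
by rewrite E eqxx in B12.
Qed.

End Sufficiency.

End Blocks.

Theorem theorem3p2 (T : finType) (e : rel T)
  (e_sym : symmetric e) (e_irr : irreflexive e)
  (G_conn : connectedb e setT)
  (G_cut : exists v : T, cut_vertexb e setT v) :
  one_perfectly_orientable_on e setT <->
  ((exists Br : {set T},
      [/\ blockb e Br, one_perfectly_orientable_on e Br &
        forall (B : {set T}) (v : T),
          blockb e B -> cut_vertexb e setT v ->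
          rooted_arc e (inl Br) (inl B) (inr v) ->
          rooted_one_perfectly_orientable e B v]) \/
   (exists vr : T,
      cut_vertexb e setT vr /\
        forall (B : {set T}) (v : T),
          blockb e B -> cut_vertexb e setT v ->
          rooted_arc e (inr vr) (inl B) (inr v) ->
          rooted_one_perfectly_orientable e B v)).
Proof.
have [v0 cv0] := G_cut; have no_isolated := connected_no_isolated G_conn cv0.
split=> [[D [D_orient D_perfect]]|].
  have [[Br|vr] nr arcs] :=
    orientation_rooted_blocks e_sym e_irr no_isolated G_conn D_orient D_perfect.
    left; exists Br; split=> // [|B v _ _]; last exact: arcs.
    by exists (restrict D Br); apply: restrict_orientation.
  by right; exists vr; split=> // B v _ _; apply: arcs.
case=> [[Br [blBr orBr arcs]]|[vr [cvr arcs]]].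
  by apply: (rooted_blocks_orientable e_sym e_irr no_isolated G_conn (r := inl Br)) => // B [<-].
exact: (rooted_blocks_orientable e_sym e_irr no_isolated G_conn (r := inr vr)).
Qed.
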